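(* Let $H$ be a finite abelian group and $k$ a positive integer. Suppose that for infinitely many primes $p$, every non-zero sum subset of size $k$ of $(\mathbb{Z}_p \times H) \setminus \{0_{\mathbb{Z}_p\times H}\}$ is sequenceable. Then there exists a positive integer $N(k)$ such that for every abelian group $G$ with $\vartheta(G) > N(k)$, every non-zero sum subset of size $k$ of $(G \times H) \setminus \{0_{G\times H}\}$ is sequenceable.
   Context: For an abelian group $G$, $\vartheta(G) = \min_{0_G \neq g \in G} o(g)$, where $o(g)$ is the order of $g$. For a finite subset $S$ of an abelian group with $|S| = k$, an ordering $(x_1,\dots,x_k)$ of $S$ has partial sums $(y_0,\dots,y_k)$ with $y_0 = 0$, $y_i = x_1+\cdots+x_i$. It is a sequencing if the $y_i$ are pairwise distinct, and a rotational sequencing if they are pairwise distinct except that $y_k = y_0 = 0$; $S$ is sequenceable if it has one or the other. $S$ is non-zero sum if the sum of its elements is nonzero. *)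

From HB Require Import structures.
From mathcomp Require Import all_boot all_order all_algebra.
Set Implicit Arguments. Unset Strict Implicit. Unset Printing Implicit Defensive.
Import Order.TTheory GRing.Theory.
Local Open Scope ring_scope.

(* A finite subset S of an abelian group V is represented by a duplicate-free
   sequence (uniq S); |S| = size S. *)

Definition partial_sums (V : zmodType) (x : seq V) : seq V :=
  [seq \sum_(y <- take i x) y | i <- iota 0 (size x).+1].

Definition is_sequencing (V : zmodType) (x : seq V) : bool :=
  uniq (partial_sums x).

Definition is_rotational_sequencing (V : zmodType) (x : seq V) : bool :=
  (nth 0 (partial_sums x) (size x) == 0) && uniq (take (size x) (partial_sums x)).

Definition sequenceable (V : zmodType) (S : seq V) : Prop :=
  exists x : seq V, perm_eq x S /\ (is_sequencing x \/ is_rotational_sequencing x).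

Definition nonzero_sum (V : zmodType) (S : seq V) : bool :=
  \sum_(s <- S) s != 0.

Definition all_nzs_subsets_sequenceable (V : zmodType) (k : nat) : Prop :=
  forall S : seq V, uniq S -> size S = k -> 0 \notin S -> nonzero_sum S ->
    sequenceable S.

(* o(g) > N : no m with 1 <= m <= N kills g (infinite order counts as > N). *)
Definition order_gt (V : zmodType) (g : V) (N : nat) : Prop :=
  forall m : nat, (0 < m)%N -> (m <= N)%N -> g *+ m != 0.

(* theta(V) > N, where theta(V) = min over nonzero g of o(g)
   (min of the empty family / of infinite orders taken as +infinity). *)
Definition theta_gt (V : zmodType) (N : nat) : Prop :=
  forall g : V, g != 0 -> order_gt g N.

From HB Require Import structures.
From mathcomp Require Import all_boot all_order all_algebra.
Import Order.TTheory GRing.Theory Num.Theory.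
Set Implicit Arguments. Unset Strict Implicit. Unset Printing Implicit Defensive.
Local Open Scope ring_scope.

(* Whether S = {x_1, ..., x_k} is a non-zero sum subset of V \ {0} and whether
   an ordering of S is a sequencing only depend on which subset sums of the x_i
   vanish and which x_i coincide, i.e. on which vectors c of a fixed finite
   family of integer vectors satisfy sum_i c_i x_i = 0.  Write x_i = (g_i, h_i)
   in G x H.  If a vector c is a rational combination of relations of g, then
   D c is an integral one for some D <= N, where N only depends on the finite
   family; so theta(G) > N forces sum_i c_i g_i = 0.  Hence the relations of g
   in the family are exactly the vectors of the rational span of these
   relations, and a generic integral vector z orthogonal to them has the same
   relations as g.  Reducing z modulo a large prime p given by the hypothesis
   yields a_i in Z_p such that {(a_i, h_i)} has the same relations as S, and a
   sequencing of it pulls back to one of S (a rotational sequencing is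
   impossible for a non-zero sum set). *)

Lemma size_partial_sums (V : zmodType) (x : seq V) :
  size (partial_sums x) = (size x).+1.
Proof. by rewrite size_map size_iota. Qed.

Lemma nth_partial_sums (V : zmodType) (x : seq V) i : (i <= size x)%N ->
  nth 0 (partial_sums x) i = \sum_(y <- take i x) y.
Proof. by move=> le_ix; rewrite (nth_map 0%N) ?size_iota // nth_iota. Qed.

Lemma sum_take_split (V : zmodType) (x : seq V) i j : (i <= j)%N ->
  \sum_(y <- take j x) y = \sum_(y <- take i x) y + \sum_(y <- drop i (take j x)) y.
Proof.
by move=> le_ij; rewrite -big_cat -{1}(cat_take_drop i (take j x)) take_takel.
Qed.

Lemma is_sequencing_map_transfer (I : finType) (V W : zmodType)
    (X : I -> V) (Y : I -> W) (s : seq I) :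
  uniq s ->
  (forall A : {set I}, \sum_(i in A) X i = 0 -> \sum_(i in A) Y i = 0) ->
  is_sequencing (map Y s) -> is_sequencing (map X s).
Proof.
move=> uniq_s XY; rewrite /is_sequencing => /(uniqP 0) uniq_psY.
apply/(uniqP 0) => i j; rewrite !inE !size_partial_sums !size_map.
wlog le_ij : i j / (i <= j)%N.
  move=> wlog_ij lt_i lt_j; case: (leqP i j) => [|/ltnW] le; first exact: wlog_ij.
  by move=> eq_ji; apply/esym/(wlog_ij j i).
rewrite !ltnS => le_i le_j.
have partial_sums_eq (U : zmodType) (Z : I -> U) :
    (nth 0 (partial_sums (map Z s)) i == nth 0 (partial_sums (map Z s)) j) =
    (\sum_(l in [set l in drop i (take j s)]) Z l == 0).
  rewrite !nth_partial_sums ?size_map // (sum_take_split _ le_ij) -!map_take.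
  rewrite -map_drop -[X in X == _]addr0 (inj_eq (addrI _)) eq_sym big_map.
  rewrite (big_uniq _ (drop_uniq _ (take_uniq _ uniq_s))).
  by congr (_ == 0); apply: eq_bigl => l; rewrite inE.
move=> /eqP; rewrite partial_sums_eq => /eqP /XY /eqP; rewrite -partial_sums_eq.
by move=> /eqP; apply: uniq_psY; rewrite inE size_partial_sums size_map ltnS.
Qed.

Definition relation_equiv (I : finType) (V W : zmodType) (X : I -> V) (Y : I -> W) :=
  (forall A : {set I}, (\sum_(i in A) X i == 0) = (\sum_(i in A) Y i == 0)) /\
  (forall i j, (X i == X j) = (Y i == Y j)).

Lemma sub_codom_map (T : finType) (T' : eqType) (f : T -> T') (x : seq T') :
  {subset x <= codom f} -> exists s, x = map f s.
Proof.
elim: x => [|y x IHx] sub_x; first by exists [::].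
have [i ->] := codomP (sub_x y (mem_head y x)).
have [s ->] : exists s, x = map f s.
  by apply: IHx => z z_x; apply: sub_x; rewrite inE z_x orbT.
by exists (i :: s).
Qed.

Lemma sum_codom (I : finType) (V : zmodType) (X : I -> V) :
  \sum_(y <- codom X) y = \sum_(i in [set: I]) X i.
Proof. by rewrite big_image; apply: eq_bigl => i; rewrite in_setT. Qed.

Lemma relation_equiv_sequenceable (I : finType) (V W : zmodType)
    (X : I -> V) (Y : I -> W) :
  relation_equiv X Y -> all_nzs_subsets_sequenceable W #|I| ->
  injective X -> 0 \notin codom X -> nonzero_sum (codom X) ->
  sequenceable (codom X).
Proof.
move=> [sumXY eqXY] seqW injX X'0 nzX.
have injY : injective Y by move=> i j /eqP; rewrite -eqXY => /eqP /injX.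
have Y'0 : 0 \notin codom Y.
  apply: contra X'0 => /codomP [i Yi0]; apply/codomP; exists i; apply/esym/eqP.
  by have := sumXY [set i]; rewrite !big_set1 -Yi0 eqxx => ->.
have nzY : nonzero_sum (codom Y).
  by move: nzX; rewrite /nonzero_sum !sum_codom sumXY.
have [x [perm_x [seq_x|rot_x]]] :=
  seqW (codom Y) (introT (injectiveP _) injY) (size_codom Y) Y'0 nzY.
- have [s x_def] : exists s, x = map Y s.
    by apply: sub_codom_map => y; rewrite (perm_mem perm_x).
  have perm_s : perm_eq s (enum I).
    by apply: (perm_map_inj injY); rewrite -x_def -codomE.
  exists (map X s); split; first by rewrite codomE perm_map.
  left; apply: (is_sequencing_map_transfer (Y := Y)); rewrite -?x_def //.
    by rewrite (perm_uniq perm_s) enum_uniq.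
  by move=> A /eqP; rewrite sumXY => /eqP.
- move: rot_x => /andP [/eqP sum_x0 _].
  have sum_x : \sum_(y <- x) y = 0.
    by rewrite -[RHS]sum_x0 nth_partial_sums ?take_size.
  by move: nzY; rewrite /nonzero_sum -(perm_big _ perm_x) sum_x eqxx.
Qed.

Lemma all_nzs_subsets_sequenceable_transfer (V : zmodType) k :
  (forall X : 'I_k -> V, exists2 W : zmodType, all_nzs_subsets_sequenceable W k &
     exists Y : 'I_k -> W, relation_equiv X Y) ->
  all_nzs_subsets_sequenceable V k.
Proof.
move=> realize S uniq_S size_S S'0 nzS.
pose X (i : 'I_k) := nth 0 S i.
have S_def : S = codom X.
  rewrite codomE -[X]/(nth 0 S \o val) map_comp val_enum_ord -size_S.
  by rewrite -/(mkseq _ _) mkseq_nth.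
have [W seqW [Y XY]] := realize X.
rewrite S_def in uniq_S S'0 nzS *; apply: (relation_equiv_sequenceable XY) => //.
- by rewrite card_ord.
- exact/injectiveP.
Qed.

Lemma mx11_eq0 (V : nmodType) (A : 'M[V]_1) : (A == 0) = (A 0 0 == 0).
Proof.
apply/eqP/eqP => [->|A0]; first by rewrite mxE.
by apply/matrixP => i j; rewrite !ord1 A0 mxE.
Qed.

Lemma kernel_vector_separating (F : fieldType) m n (U : 'M[F]_(m, n)) (v : 'rV_n) :
  ~~ (v <= U)%MS -> exists2 w : 'cV_n, U *m w = 0 & v *m w != 0.
Proof.
rewrite submxE => /matrix0Pn [i [j vK_ij]].
exists (cokermx U *m delta_mx j 0); first by rewrite mulmxA mulmx_coker mul0mx.
by rewrite mulmxA -colE mx11_eq0 mxE; rewrite ord1 in vK_ij.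
Qed.

Lemma exists_nonroot_affine (F : numFieldType) (T : eqType) (s : seq T)
    (a b : T -> F) :
  (forall x, x \in s -> (a x != 0) || (b x != 0)) ->
  exists t, forall x, x \in s -> a x + t * b x != 0.
Proof.
move=> ab_s; pose t := 1 + \sum_(y <- s) `|a y / b y|.
have t_gt0 : 0 < t by rewrite ltr_wpDr ?sumr_ge0.
exists t => x x_s; have [b0|bn0] := eqVneq (b x) 0.
  by rewrite b0 mulr0 addr0; have := ab_s x x_s; rewrite b0 eqxx orbF.
have t_gt : `|a x / b x| < t.
  by rewrite /t (big_rem x) //= addrCA ltrDl ltr_wpDr ?sumr_ge0.
apply: contraTneq t_gt => /eqP; rewrite addrC addr_eq0 => /eqP tb.
have -> : a x / b x = - t by rewrite -[t](mulfK bn0) tb mulNr opprK.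
by rewrite normrN gtr0_norm // ltxx.
Qed.

Lemma kernel_vector_avoiding (F : numFieldType) m n (U : 'M[F]_(m, n))
    (vs : seq 'rV_n) :
  (forall v, v \in vs -> ~~ (v <= U)%MS) ->
  exists2 w : 'cV_n, U *m w = 0 & forall v, v \in vs -> v *m w != 0.
Proof.
elim: vs => [|v vs IHvs] vs_U; first by exists 0; rewrite ?mulmx0.
have [w1 Uw1 vs_w1] : exists2 w1 : 'cV_n, U *m w1 = 0 &
    forall u, u \in vs -> u *m w1 != 0.
  by apply: IHvs => u u_vs; apply: vs_U; rewrite inE u_vs orbT.
have [w2 Uw2 v_w2] := kernel_vector_separating (vs_U v (mem_head v vs)).
have [t t_ok] : exists t, forall u, u \in v :: vs ->
    (u *m w1) 0 0 + t * (u *m w2) 0 0 != 0.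
  apply: exists_nonroot_affine => u; rewrite inE -!mx11_eq0.
  by case/predU1P => [->|/vs_w1 ->]; rewrite ?v_w2 ?orbT.
exists (w1 + t *: w2); first by rewrite mulmxDr -scalemxAr Uw1 Uw2 scaler0 addr0.
by move=> u /t_ok; rewrite mulmxDr -scalemxAr mx11_eq0 !mxE.
Qed.

Lemma kernel_vector_detecting (F : numFieldType) m n (U : 'M[F]_(m, n))
    (vs : seq 'rV_n) :
  exists w : 'cV_n, forall v, v \in vs -> (v *m w == 0) = (v <= U)%MS.
Proof.
have [w Uw vs_w] : exists2 w : 'cV_n, U *m w = 0 &
    forall v, v \in [seq v <- vs | ~~ (v <= U)%MS] -> v *m w != 0.
  by apply: kernel_vector_avoiding => v; rewrite mem_filter => /andP [].
exists w => v v_vs; have [vU|vU] := boolP (v <= U)%MS.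
  by have [x ->] := submxP vU; rewrite -mulmxA Uw mulmx0 eqxx.
by apply/negbTE/vs_w; rewrite mem_filter vU.
Qed.

Definition zcomb (V : zmodType) n (g : 'I_n -> V) (v : 'rV[int]_n) : V :=
  \sum_i g i *~ v 0 i.

Fact zcomb_is_zmod_morphism (V : zmodType) n (g : 'I_n -> V) :
  zmod_morphism (zcomb g).
Proof.
by move=> u v; rewrite /zcomb -sumrB; apply: eq_bigr => i _; rewrite !mxE mulrzBr.
Qed.

HB.instance Definition _ (V : zmodType) n (g : 'I_n -> V) :=
  GRing.isZmodMorphism.Build 'rV[int]_n V (zcomb g) (zcomb_is_zmod_morphism g).

Lemma intr_zcomb (R : pzRingType) n (z : 'I_n -> int) (v : 'rV[int]_n) :
  (zcomb z v)%:~R = zcomb (fun i => (z i)%:~R : R) v.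
Proof. by rewrite rmorph_sum; apply: eq_bigr => i _; rewrite rmorphMz. Qed.

Lemma zcomb_delta (V : zmodType) n (g : 'I_n -> V) i : zcomb g (delta_mx 0 i) = g i.
Proof.
rewrite /zcomb (bigD1 i) //= mxE !eqxx big1 ?addr0 // => l /negbTE l_i.
by rewrite mxE l_i andbF mulr0z.
Qed.

Lemma denominators_clear (T : finType) (x : T -> rat) :
  exists2 D : nat, (0 < D)%N &
    exists z : T -> int, forall t, D%:R * x t = (z t)%:~R.
Proof.
exists (\prod_t `|denq (x t)|)%N.
  by rewrite prodn_gt0 // => t; rewrite absz_gt0 denq_neq0.
exists (fun t => numq (x t) * (\prod_(t' | t' != t) `|denq (x t')|)%N) => t.
rewrite (bigD1 t) //= natrM intrM mulrAC numqE -absz_denq.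
by congr (_ * _); apply: mulrC.
Qed.

Definition rat_span (T : finType) n (c : T -> 'rV[int]_n) (R : {set T}) :
  'M[rat]_n := (\sum_(r in R) <<map_mx intr (c r)>>)%MS.

Lemma rat_span_int_comb (T : finType) n (c : T -> 'rV[int]_n) (R : {set T})
    (v : 'rV[int]_n) :
  (map_mx intr v <= rat_span c R)%MS ->
  exists2 D : nat, (0 < D)%N &
    exists u : T -> int, v *+ D = \sum_(r in R) c r *~ u r.
Proof.
case/sub_sums_genmxP => x v_def.
have [D D0 [u Du]] := denominators_clear (fun r => x r 0 0).
exists D => //; exists u; apply/rowP => i; apply: (@intr_inj rat).
move/rowP/(_ i): v_def; rewrite mxE summxE => v_i.
rewrite mulmxnE rmorphMn /= v_i summxE rmorph_sum -sumrMnl; apply: eq_bigr => r _.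
by rewrite -scaler_int intz !mxE big_ord1 mxE -mulr_natl mulrA Du rmorphM.
Qed.

Lemma finite_uniform_bound (T : finType) (P : T -> nat -> Prop) :
  (forall t, exists n, P t n) -> exists N, forall t, exists2 n, (n <= N)%N & P t n.
Proof.
move=> P_ex.
suff [N PN] : exists N, forall t, t \in enum T -> exists2 n, (n <= N)%N & P t n.
  by exists N => t; apply: PN; rewrite mem_enum.
elim: (enum T) => [|t0 s [N PN]]; first by exists 0%N.
have [n0 Pn0] := P_ex t0; exists (maxn n0 N) => t /predU1P [->|/PN [n le_nN Pn]].
  by exists n0; rewrite ?leq_maxl.
by exists n; rewrite ?(leq_trans le_nN) ?leq_maxr.
Qed.

Definition denominator_le (T : finType) n (c : T -> 'rV[int]_n) N R t :=
  (map_mx intr (c t) <= rat_span c R)%MS ->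
  exists2 D : nat, (0 < D <= N)%N &
    exists u : T -> int, c t *+ D = \sum_(r in R) c r *~ u r.

Lemma bounded_denominators (T : finType) n (c : T -> 'rV[int]_n) :
  exists2 N, (0 < N)%N & forall R t, denominator_le c N R t.
Proof.
have [N PN] : exists N, forall Rt : {set T} * T,
    exists2 m, (m <= N)%N & denominator_le c m Rt.1 Rt.2.
  apply: finite_uniform_bound => -[R t] /=.
  have [Rt_t|Rt_t] := boolP (map_mx intr (c t) <= rat_span c R)%MS;
    last by exists 0%N => /(negP Rt_t).
  have [D D0 u_D] := rat_span_int_comb Rt_t.
  by exists D => _; exists D; rewrite ?D0 /=.
exists N.+1 => // R t Rt_t.
have [m le_mN /(_ Rt_t) [D /andP [D0 le_Dm] u_D]] := PN (R, t).
by exists D; rewrite ?D0 ?(leq_trans le_Dm) ?(leq_trans le_mN).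
Qed.

Lemma zcomb_eq0_span (T : finType) n (c : T -> 'rV[int]_n) N (V : zmodType)
    (g : 'I_n -> V) :
  (forall R t, denominator_le c N R t) -> theta_gt V N ->
  forall t, (zcomb g (c t) == 0) =
    (map_mx intr (c t) <= rat_span c [set r | zcomb g (c r) == 0])%MS.
Proof.
move=> boundN thetaV t; apply/idP/idP => [gt0|].
  by rewrite (sumsmx_sup t) ?inE ?genmxE.
case/boundN => D /andP [D0 le_DN] [u u_D]; apply: contraLR isT => gtn0.
have := thetaV _ gtn0 D D0 le_DN; rewrite -raddfMn u_D raddf_sum big1 ?eqxx // => r.
by rewrite inE raddfMz /= => /eqP ->; rewrite mul0rz.
Qed.

Lemma integral_realization (T : finType) n (c : T -> 'rV[int]_n) :
  exists2 N, (0 < N)%N & forall (V : zmodType) (g : 'I_n -> V), theta_gt V N ->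
    exists z : 'I_n -> int, forall t, (zcomb g (c t) == 0) = (zcomb z (c t) == 0).
Proof.
have [N N0 boundN] := bounded_denominators c; exists N => // V g thetaV.
have [w w_span] := kernel_vector_detecting
  (rat_span c [set r | zcomb g (c r) == 0]) (codom (fun t => map_mx intr (c t))).
have [D D0 [z z_w]] := denominators_clear (fun i => w i 0).
exists z => t; rewrite (zcomb_eq0_span g boundN thetaV) -w_span ?codom_f //.
have -> : (zcomb z (c t) == 0) = ((zcomb z (c t))%:~R == 0 :> rat).
  by rewrite intr_eq0.
have -> : (zcomb z (c t))%:~R = D%:R * (map_mx intr (c t) *m w) 0 0 :> rat.
  rewrite intr_zcomb mxE mulr_sumr; apply: eq_bigr => i _.
  by rewrite -z_w mxE -mulrzr -mulrA [w i 0 * _]mulrC.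
by rewrite mx11_eq0 mulf_eq0 pnatr_eq0 gtn_eqF.
Qed.

Lemma Zp_intr_eq0 p (z : int) : (1 < p)%N -> (`|z| < p)%N ->
  ((z%:~R : 'Z_p) == 0) = (z == 0).
Proof.
move=> p_gt1; have Zp_nat_eq0 m : (m < p)%N -> ((m%:R : 'Z_p) == 0) = (m == 0)%N.
  by move=> lt_mp; rewrite Zp_nat -val_eqE /= Zp_cast // modn_small.
case: z => [m|m] /= lt_mp; first exact: Zp_nat_eq0.
by rewrite NegzE mulrNz oppr_eq0 Zp_nat_eq0.
Qed.

Lemma zcomb_Zp_eq0 (T : finType) n (c : T -> 'rV[int]_n) (z : 'I_n -> int) :
  exists m, forall p, (1 < p)%N -> (m < p)%N ->
    forall t, (zcomb (fun i => (z i)%:~R : 'Z_p) (c t) == 0) = (zcomb z (c t) == 0).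
Proof.
exists (\sum_t `|zcomb z (c t)|)%N => p p_gt1 lt_mp t.
rewrite -intr_zcomb Zp_intr_eq0 //; apply: leq_ltn_trans lt_mp.
by rewrite (bigD1 t) //= leq_addr.
Qed.

Definition relation_row k (t : {set 'I_k} + 'I_k * 'I_k) : 'rV[int]_k :=
  match t with
  | inl A => \row_i (i \in A)%:Z
  | inr (i, j) => delta_mx 0 i - delta_mx 0 j
  end.

Lemma relation_equiv_zcomb (V W : zmodType) k (g : 'I_k -> V) (a : 'I_k -> W) :
  (forall t, (zcomb g (relation_row t) == 0) = (zcomb a (relation_row t) == 0)) ->
  relation_equiv g a.
Proof.
have zcomb_set (U : zmodType) (f : 'I_k -> U) A :
    zcomb f (relation_row (inl A)) = \sum_(i in A) f i.
  rewrite /zcomb [RHS]big_mkcond; apply: eq_bigr => i _.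
  by rewrite mxE; case: (i \in A).
move=> same; split => [A|i j]; first by have := same (inl A); rewrite !zcomb_set.
by have := same (inr (i, j)); rewrite /= !raddfB /= !zcomb_delta !subr_eq0.
Qed.

Lemma sum_pair_eq0 (I : finType) (V U : zmodType) (P : pred I) (X : I -> V * U) :
  (\sum_(i | P i) X i == 0) =
    (\sum_(i | P i) (X i).1 == 0) && (\sum_(i | P i) (X i).2 == 0).
Proof. by rewrite -(raddf_sum fst) -(raddf_sum snd). Qed.

Lemma relation_equiv_pair (I : finType) (V U W : zmodType) (X : I -> V * U)
    (a : I -> W) :
  relation_equiv (fun i => (X i).1) a -> relation_equiv X (fun i => (a i, (X i).2)).
Proof.
move=> [sum_a eq_a]; split => [A|i j]; first by rewrite !sum_pair_eq0 sum_a.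
by rewrite -!pair_eqE /= /pair_eq /= eq_a.
Qed.

Theorem corollary4p7 (H : finZmodType) (k : nat) :
  (0 < k)%N ->
  (forall n : nat, exists p : nat,
      (n < p)%N /\ prime p /\ all_nzs_subsets_sequenceable ('Z_p * H)%type k) ->
  exists N : nat, (0 < N)%N /\
    forall G : zmodType, theta_gt G N ->
      all_nzs_subsets_sequenceable (G * H)%type k.
Proof.
move=> _ primes_ok; have [N N0 realize] := integral_realization (@relation_row k).
exists N; split=> // G thetaG; apply: all_nzs_subsets_sequenceable_transfer => X.
have [z g_z] := realize G (fun i => (X i).1) thetaG.
have [m z_Zp] := zcomb_Zp_eq0 (@relation_row k) z.
have [p [lt_mp [p_prime seqZpH]]] := primes_ok m.
exists ('Z_p * H)%type => //; exists (fun i => ((z i)%:~R, (X i).2)).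
apply/relation_equiv_pair/relation_equiv_zcomb => t.
by rewrite g_z z_Zp ?prime_gt1.
Qed.
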